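(* Let $d\ge1$ and $q\in\{2,4\}$, and let $G$ be a function on $[0,\infty)$ with $G\in\mathcal M_{d,0,q}\cap\mathcal N_{\frac q2-1}$. Let $S_1,\ldots,S_{q/2}$ be the subintervals of $[0,\infty)$ from the definition of sign changes for $G$. Then $G(x)\ge0$ for $x\in S_1\cup S_3\cup\cdots$ and $G(x)\le0$ for $x\in S_2\cup S_4\cup\cdots$. Moreover, $\mathrm{sign}(B_{d,q}(G))=(-1)^{q/2+1}$.
   Context: $B_{d,i}(g)=\int_0^\infty x^{d-1+i}g(x)dx$; $b_d=2\pi^{d/2}/\Gamma(d/2)$. $\mathcal M_{d,0,q}$ is the set of $g$ on $[0,\infty)$ with $B_{d,0}(g)=b_d^{-1}$, $B_{d,i}(g)=0$ for $i=2,4,\ldots,q-2$, and $B_{d,q}(g)\ne0$. $\mathcal N_j$ is the set of functions on $[0,\infty)$ that change their sign exactly $j$ times on $[0,\infty)$, where $g$ changes its sign $k$ times on $[a,b]$ if there are $a=x_0<\cdots<x_{k+1}=b$ such that, with $S_j=[x_{j-1},x_j]$, on each $S_j$ either $g\le0$ with $g<0$ somewhere or $g\ge0$ with $g>0$ somewhere, and (if $k\ge1$) $g(x)g(y)\le0$ for all $x\in S_j$, $y\in S_{j+1}$. *)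

From HB Require Import structures.
From mathcomp Require Import all_boot all_order all_algebra.
From mathcomp Require Import all_classical all_reals all_analysis.
Set Implicit Arguments. Unset Strict Implicit. Unset Printing Implicit Defensive.
Import Order.TTheory GRing.Theory Num.Theory.
Import numFieldNormedType.Exports.
Local Open Scope classical_set_scope.
Local Open Scope ring_scope.

Section Defs.
Variable R : realType.
Local Notation leb := (@lebesgue_measure R).

Definition Gamma (s : R) : R :=
  Rintegral leb `]0%R, +oo[ (fun t => t `^ (s - 1) * expR (- t)).

(* b_d = 2 pi^(d/2) / Gamma(d/2): surface area of the unit sphere in R^d *)
Definition b_ (d : nat) : R :=
  2 * pi `^ (d%:R / 2) / Gamma (d%:R / 2).

Definition Bfun (d i : nat) (g : R -> R) : R -> R :=
  fun x => x ^+ (d.-1 + i) * g x.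

Definition B_ (d i : nat) (g : R -> R) : R :=
  Rintegral leb `[0%R, +oo[ (Bfun d i g).

Definition M_d0q (d q : nat) (g : R -> R) : Prop :=
  [/\ (forall i : nat, (i <= q)%N -> ~~ odd i ->
         leb.-integrable `[0%R, +oo[ (fun x => (Bfun d i g x)%:E)),
      B_ d 0 g = (b_ d)^-1,
      (forall i : nat, (2 <= i <= q - 2)%N -> ~~ odd i -> B_ d i g = 0)
    & B_ d q g != 0].

(* The subintervals S_1, ..., S_{k+1} of [0,oo) determined by the points
   0 = x_0 < x_1 < ... < x_k < x_{k+1} = +oo :
   S_j = [x_{j-1}, x_j] for 1 <= j <= k, and S_{k+1} = [x_k, +oo). *)
Definition Sint (x : nat -> R) (k j : nat) : set R :=
  if (j <= k)%N then [set` `[x j.-1, x j]] else [set` `[x k, +oo[].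

Definition sign_block (g : R -> R) (S : set R) : Prop :=
  ((forall y, S y -> g y <= 0) /\ (exists2 y, S y & g y < 0)) \/
  ((forall y, S y -> 0 <= g y) /\ (exists2 y, S y & 0 < g y)).

Definition sign_partition (g : R -> R) (k : nat) (x : nat -> R) : Prop :=
  [/\ x 0%N = 0,
      (forall i : nat, (i < k)%N -> x i < x i.+1),
      (forall j : nat, (1 <= j <= k.+1)%N -> sign_block g (Sint x k j))
    & (1 <= k)%N -> forall j : nat, (1 <= j <= k)%N ->
         forall y z, Sint x k j y -> Sint x k j.+1 z -> g y * g z <= 0].

Definition changes_sign (g : R -> R) (k : nat) : Prop :=
  exists x, sign_partition g k x.

Definition N_ (j : nat) : set (R -> R) := [set g | changes_sign g j].

End Defs.

From HB Require Import structures.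
From mathcomp Require Import all_boot all_order all_algebra.
From mathcomp Require Import all_classical all_reals all_analysis.
From mathcomp Require Import ring lra.
Import Order.TTheory GRing.Theory Num.Theory.
Local Open Scope classical_set_scope.
Local Open Scope ring_scope.

(* Write m_i for the integrand x^(d-1+i) G(x) of B_{d,i}(G).  If a combination
   h = c m_i + e m_j is nonnegative on [0, oo) while c B_i + e B_j <= 0, then
   h = 0 a.e., so every integrable multiple w h integrates to 0.  For q = 2
   this excludes G <= 0: h = -m_0 has integral -1/b_d <= 0 and m_2 = -x^2 h,
   contradicting B_2 <> 0.  For q = 4 with the sign change at a, the pattern
   (-, +) makes h = (x^2 - a^2) m_0 nonnegative with integral
   B_2 - a^2 B_0 = -a^2/b_d <= 0, which forces B_4 = a^4 B_0 = 0; so the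
   pattern is (+, -), and then (a^2 - x^2) x^2 m_0 >= 0 integrates to -B_4. *)

Section integral_facts.
Context {disp : measure_display} {T : measurableType disp} {R : realType}.
Context {mu : {measure set T -> \bar R}} {D : set T}.
Hypothesis mD : measurable D.

Lemma Rintegral_lincomb (a b : R) [f g : T -> R] :
  mu.-integrable D (EFin \o f) -> mu.-integrable D (EFin \o g) ->
  mu.-integrable D (EFin \o (fun x => a * f x + b * g x)) /\
  Rintegral mu D (fun x => a * f x + b * g x) =
    a * Rintegral mu D f + b * Rintegral mu D g.
Proof.
move=> intf intg.
have intaf : mu.-integrable D (EFin \o (fun x => a * f x)).
  exact: eq_integrable mD _ _ (fun x _ => erefl) (integrableZl mD a intf).
have intbg : mu.-integrable D (EFin \o (fun x => b * g x)).
  exact: eq_integrable mD _ _ (fun x _ => erefl) (integrableZl mD b intg).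
split; first exact: eq_integrable mD _ _ (fun x _ => erefl)
                                  (integrableD mD intaf intbg).
by rewrite RintegralD // !RintegralZl.
Qed.

Lemma Rintegral_opp [f : T -> R] : mu.-integrable D (EFin \o f) ->
  mu.-integrable D (EFin \o (fun x => - f x)) /\
  Rintegral mu D (fun x => - f x) = - Rintegral mu D f.
Proof.
move=> intf; split; first exact: eq_integrable mD _ _ _ (integrableN intf).
rewrite -mulN1r -RintegralZl //.
by apply: eq_Rintegral => x _; rewrite mulN1r.
Qed.

Lemma Rintegral_eq0_mul [f g w : T -> R] :
  mu.-integrable D (EFin \o f) -> mu.-integrable D (EFin \o g) ->
  (forall x, D x -> 0 <= f x) -> Rintegral mu D f = 0 ->
  (forall x, D x -> g x = w x * f x) -> Rintegral mu D g = 0.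
Proof.
move=> intf intg f_ge0 If0 gE.
have [mf _] := integrableP _ _ _ intf.
have absf0 : (\int[mu]_(x in D) `|(EFin \o f) x| = 0)%E.
  transitivity (\int[mu]_(x in D) (EFin \o f) x)%E.
    by apply: eq_integral => x /[!inE] Dx /=; rewrite ger0_norm // f_ge0.
  by rewrite -[LHS]fineK ?integrable_fin_num // -/(Rintegral _ _ _) If0.
have /(ae_eq_integral_abs mu mD mf) f_ae0 := absf0.
have g_ae0 : ae_eq mu D (EFin \o g) (cst 0%E).
  apply: filterS f_ae0 => x fx0 Dx /=.
  by have [/= fx0'] := fx0 Dx; rewrite gE // fx0' mulr0.
rewrite /Rintegral (ae_eq_integral (cst 0%E)) ?integral0 //.
by have [] := integrableP _ _ _ intg.
Qed.

End integral_facts.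

Lemma b_ge0 (R : realType) (d : nat) : 0 <= b_ R d.
Proof.
rewrite /b_ divr_ge0 ?mulr_ge0 ?powR_ge0 //.
by apply: Rintegral_ge0 => t _; rewrite mulr_ge0 ?powR_ge0 ?expR_ge0.
Qed.

Lemma sign_change_weight_ge0 (R : realFieldType) (g : R -> R) (a y : R) :
  0 <= a -> 0 <= y -> (y <= a -> g y <= 0) -> (a <= y -> 0 <= g y) ->
  0 <= (y ^+ 2 - a ^+ 2) * g y.
Proof.
move=> a_ge0 y_ge0 gle gge; have [ya|/ltW ay] := leP y a.
  by apply: mulr_le0; [nra | exact: gle].
by apply: mulr_ge0; [nra | exact: gge].
Qed.

Section sign_partitions.
Context {R : realType}.
Implicit Types (g : R -> R) (x : nat -> R).

Lemma Sint_le x k j y : (j <= k)%N -> Sint x k j y <-> x j.-1 <= y <= x j.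
Proof. by move=> jk; rewrite /Sint jk /= in_itv. Qed.

Lemma Sint_last x k y : Sint x k k.+1 y <-> x k <= y.
Proof. by rewrite /Sint ltnn /= in_itv /= andbT. Qed.

Lemma sign_partition_ge0 {g k x} : sign_partition g k x ->
  forall i, (i <= k)%N -> 0 <= x i.
Proof.
case=> x0 x_lt _ _; elim => [|i IHi] ik; first by rewrite x0.
by rewrite (le_trans (IHi (ltnW ik))) ?ltW ?x_lt.
Qed.

Lemma sign_partition_next_le0 {g k x j} : sign_partition g k x ->
  (1 <= j <= k)%N -> (exists2 y, Sint x k j y & 0 < g y) ->
  forall z, Sint x k j.+1 z -> g z <= 0.
Proof.
case=> _ _ _ alt jk [y Sy gy_gt0] z Sz.
have k_ge1 : (1 <= k)%N by case/andP: jk; exact: leq_trans.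
by have := alt k_ge1 j jk y z Sy Sz; nra.
Qed.

Lemma sign_partition_next_ge0 {g k x j} : sign_partition g k x ->
  (1 <= j <= k)%N -> (exists2 y, Sint x k j y & g y < 0) ->
  forall z, Sint x k j.+1 z -> 0 <= g z.
Proof.
case=> _ _ _ alt jk [y Sy gy_lt0] z Sz.
have k_ge1 : (1 <= k)%N by case/andP: jk; exact: leq_trans.
by have := alt k_ge1 j jk y z Sy Sz; nra.
Qed.

End sign_partitions.

Section moments.
Context {R : realType} {d : nat} {G : R -> R}.
Local Notation leb := (@lebesgue_measure R).

Let Rge0 : set R := `[0%R, +oo[.

Let Rge0P y : Rge0 y <-> 0 <= y.
Proof. by rewrite /Rge0 /= in_itv /= andbT. Qed.

Let mRge0 : measurable (Rge0 : set (measurableTypeR R)).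
Proof. exact: measurable_itv. Qed.

Let Rintegral_Bfun i : Rintegral leb Rge0 (Bfun d i G) = B_ d i G.
Proof. by []. Qed.

Lemma Bfun_addn i j y : Bfun d (i + j) G y = y ^+ j * Bfun d i G y.
Proof. by rewrite /Bfun addnA exprD -mulrA mulrCA. Qed.

Lemma M_d0q2_not_le0 : M_d0q d 2 G -> ~ (forall y, 0 <= y -> G y <= 0).
Proof.
case=> int B0 _ B2_neq0 G_le0; move/eqP: B2_neq0; apply.
have int0 := int 0%N isT isT.
have [int_h Ih] := Rintegral_opp mRge0 int0.
have h_ge0 y : Rge0 y -> 0 <= - Bfun d 0 G y.
  by move=> /Rge0P y_ge0; rewrite oppr_ge0 mulr_ge0_le0 ?exprn_ge0 ?G_le0.
have Ih0 : Rintegral leb Rge0 (fun y => - Bfun d 0 G y) = 0.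
  apply/eqP; rewrite eq_le Rintegral_ge0 // andbT Ih.
  by rewrite Rintegral_Bfun B0 oppr_le0 invr_ge0 b_ge0.
apply: (Rintegral_eq0_mul mRge0 (w := fun y => - y ^+ 2) int_h (int 2%N isT isT))
  => // y _.
by rewrite (Bfun_addn 0 2) mulrNN.
Qed.

Lemma M_d0q4_no_up_crossing {a : R} : M_d0q d 4 G -> 0 <= a ->
  (forall y, 0 <= y <= a -> G y <= 0) -> (forall y, a <= y -> 0 <= G y) -> False.
Proof.
case=> int B0 B2 B4_neq0 a_ge0 G_le0 G_ge0; move/eqP: B4_neq0; apply.
have B2_0 : B_ d 2 G = 0 := B2 2%N isT isT.
have int0 := int 0%N isT isT.
have [int_h Ih] := Rintegral_lincomb mRge0 1 (- a ^+ 2) (int 2%N isT isT) int0.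
have [int_k Ik] := Rintegral_lincomb mRge0 1 (- a ^+ 4) (int 4%N isT isT) int0.
have h_ge0 y : Rge0 y -> 0 <= 1 * Bfun d 2 G y + - a ^+ 2 * Bfun d 0 G y.
  move=> /Rge0P y_ge0.
  rewrite (Bfun_addn 0 2) mul1r mulNr -mulrBl mulrA [_ * y ^+ _]mulrC -mulrA.
  rewrite mulr_ge0 ?exprn_ge0 // sign_change_weight_ge0 // => [ya|ay].
    by apply: G_le0; rewrite y_ge0.
  exact: G_ge0.
have Ih0 :
    Rintegral leb Rge0 (fun y => 1 * Bfun d 2 G y + - a ^+ 2 * Bfun d 0 G y) = 0.
  apply/eqP; rewrite eq_le Rintegral_ge0 // andbT Ih !Rintegral_Bfun B0 B2_0.
  by rewrite mul1r add0r mulNr oppr_le0 mulr_ge0 ?invr_ge0 ?b_ge0 ?exprn_ge0.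
have a2B0 : a ^+ 2 * B_ d 0 G = 0.
  apply/eqP; move: Ih0.
  rewrite Ih !Rintegral_Bfun B2_0 mul1r add0r mulNr => /eqP.
  by rewrite oppr_eq0.
have Ik0 :
    Rintegral leb Rge0 (fun y => 1 * Bfun d 4 G y + - a ^+ 4 * Bfun d 0 G y) = 0.
  apply: (Rintegral_eq0_mul mRge0 (w := fun y => y ^+ 2 + a ^+ 2) int_h int_k)
    => // y _.
  by rewrite (Bfun_addn 0 4) (Bfun_addn 0 2); ring.
move: Ik0; rewrite Ik !Rintegral_Bfun mul1r mulNr => /eqP.
rewrite subr_eq0 => /eqP ->.
by rewrite -[4%N]/(2 + 2)%N exprD -mulrA a2B0 mulr0.
Qed.

Lemma M_d0q4_down_crossing_B4_lt0 {a : R} : M_d0q d 4 G -> 0 <= a ->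
  (forall y, 0 <= y <= a -> 0 <= G y) -> (forall y, a <= y -> G y <= 0) ->
  B_ d 4 G < 0.
Proof.
case=> int _ B2 B4_neq0 a_ge0 G_ge0 G_le0.
have [_ Ih] :=
  Rintegral_lincomb mRge0 (a ^+ 2) (-1) (int 2%N isT isT) (int 4%N isT isT).
have :
    0 <= Rintegral leb Rge0 (fun y => a ^+ 2 * Bfun d 2 G y + -1 * Bfun d 4 G y).
  apply: Rintegral_ge0 => y /Rge0P y_ge0.
  have -> : a ^+ 2 * Bfun d 2 G y + -1 * Bfun d 4 G y =
      y ^+ 2 * y ^+ d.-1 * ((y ^+ 2 - a ^+ 2) * - G y).
    by rewrite (Bfun_addn 0 2) (Bfun_addn 0 4) /Bfun addn0; ring.
  apply: mulr_ge0; first by rewrite mulr_ge0 ?exprn_ge0.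
  apply: (sign_change_weight_ge0 _ (fun z => - G z)) => //= [ya|ay].
    by rewrite oppr_le0 G_ge0 // y_ge0 ya.
  by rewrite oppr_ge0 G_le0.
rewrite Ih !Rintegral_Bfun B2 // mulr0 add0r mulN1r oppr_ge0 => B4_le0.
by rewrite lt_neqAle B4_neq0.
Qed.

Lemma M_d0q2_partition_ge0 {x : nat -> R} :
  M_d0q d 2 G -> sign_partition G 0 x ->
  forall y, 0 <= y -> 0 <= G y.
Proof.
move=> M [x0 _ blocks _] y y_ge0.
have Sy z : 0 <= z -> Sint x 0 1 z by move=> z_ge0; apply/Sint_last; rewrite x0.
case: (blocks 1%N isT) => [[G_le0 _] | [G_ge0 _]]; last exact/G_ge0/Sy.
by case: (M_d0q2_not_le0 M) => z /Sy; exact: G_le0.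
Qed.

Lemma M_d0q2_B2_gt0 {x : nat -> R} :
  M_d0q d 2 G -> sign_partition G 0 x -> 0 < B_ d 2 G.
Proof.
move=> M P; have [_ _ _ B2_neq0] := M.
rewrite lt_def B2_neq0 -Rintegral_Bfun /=.
apply: Rintegral_ge0 => y /Rge0P y_ge0.
by rewrite /Bfun mulr_ge0 ?exprn_ge0 // (M_d0q2_partition_ge0 M P).
Qed.

Lemma M_d0q4_partition_signs {x : nat -> R} :
  M_d0q d 4 G -> sign_partition G 1 x ->
  (forall y, 0 <= y <= x 1%N -> 0 <= G y) /\ (forall y, x 1%N <= y -> G y <= 0).
Proof.
move=> M P; have [x0 _ blocks _] := P.
have a_ge0 : 0 <= x 1%N := sign_partition_ge0 P 1 isT.
have S1P y : Sint x 1 1 y <-> 0 <= y <= x 1%N by rewrite Sint_le // x0.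
case: (blocks 1%N isT) => [[G_le0 neg] | [G_ge0 pos]].
  exfalso; apply: (M_d0q4_no_up_crossing M a_ge0) => y Sy.
    exact/G_le0/S1P.
  by apply: (sign_partition_next_ge0 (j := 1%N) P isT neg); apply/Sint_last.
split=> y Sy; first exact/G_ge0/S1P.
by apply: (sign_partition_next_le0 (j := 1%N) P isT pos); apply/Sint_last.
Qed.

Lemma M_d0q4_B4_lt0 {x : nat -> R} :
  M_d0q d 4 G -> sign_partition G 1 x -> B_ d 4 G < 0.
Proof.
move=> M P; have [G_ge0 G_le0] := M_d0q4_partition_signs M P.
exact: M_d0q4_down_crossing_B4_lt0 M (sign_partition_ge0 P 1 isT) G_ge0 G_le0.
Qed.

End moments.

Theorem lemmaB3 (R : realType) (d q : nat) (G : R -> R) :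
  (1 <= d)%N -> (q = 2%N \/ q = 4%N) ->
  M_d0q d q G -> G \in N_ (q./2 - 1) ->
  (forall x : nat -> R, sign_partition G (q./2 - 1) x ->
     forall j : nat, (1 <= j <= q./2)%N ->
       (odd j -> forall y, Sint x (q./2 - 1) j y -> 0 <= G y) /\
       (~~ odd j -> forall y, Sint x (q./2 - 1) j y -> G y <= 0)) /\
  Num.sg (B_ d q G) = (-1) ^+ (q./2 + 1).
Proof.
move=> _ [->|->] M; rewrite inE => -[w Pw] /=; split.
- move=> x P j /andP[j_ge1 j_le1].
  have -> : j = 1%N by apply/eqP; rewrite eqn_leq j_le1.
  split=> // _ y /Sint_last; have [-> _ _ _] := P.
  exact: M_d0q2_partition_ge0 M P y.
- by rewrite (gtr0_sg (M_d0q2_B2_gt0 M Pw)) -signr_odd.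
- move=> x P j /andP[j_ge1 j_le2].
  have [G_ge0 G_le0] := M_d0q4_partition_signs M P; have [x0 _ _ _] := P.
  case: j j_ge1 j_le2 => [|[|[|j]]] // _ _; split=> // _ y.
    by rewrite Sint_le // x0; exact: G_ge0.
  by move/Sint_last; exact: G_le0.
- by rewrite (ltr0_sg (M_d0q4_B4_lt0 M Pw)) -signr_odd.
Qed.
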